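(* Let $Q=[(n_1,q_1),\dots,(n_m,q_m)]$ be a compatible pointed irregular type. Then a list $Q'=[(n'_1,q'_1),\dots,(n'_p,q'_p)]$ satisfies $Q'\sim Q$ if and only if $Q'$ is a compatible pointed irregular type whose labelled fission datum equals that of $Q$, i.e. $p=m$, $n'_i=n_i$ and $\mathrm{Levels}(q'_i)=\mathrm{Levels}(q_i)$ for all $i$, and $f_{q'_i,q'_j}=f_{q_i,q_j}$ for all $i\ne j$.
   Context: Exponential factors: finite sums $q=\sum_ka_kx^k$, $a_k\in\mathbb C$, $k\in\mathbb Q_{>0}$; $E(q)$ = set of exponents with $a_k\ne0$; $\mathrm{slope}(q)=\max E(q)$ ($0$ if $q=0$); $\mathrm{ram}(q)$ = least $r\ge1$ with $q\in x^{1/r}\mathbb C[x^{1/r}]$. Galois operator $\sigma(\sum a_kx^k)=\sum a_ke^{-2\pi\sqrt{-1}k}x^k$; Stokes circle $\langle q\rangle=\{\sigma^i(q)\}$. Truncation $\tau_k(\sum a_{k'}x^{k'})=\sum_{k'\ge k}a_{k'}x^{k'}$. $\mathrm{Levels}(q)=\{\mathrm{slope}(q-\sigma^i(q)):i\in\mathbb Z\}\setminus\{0\}$. Fission exponent: for $q,\hat q$ in distinct orbits, if some $k\in E(q)$ has $\langle\tau_k(q)\rangle=\langle\tau_k(\hat q)\rangle$, let $k$ be the smallest, $q_c=\tau_k(q)$, $\hat q_c=\tau_k(\hat q)$; else $q_c=\hat q_c=0$; $f_{q,\hat q}=\max(\mathrm{slope}(q-q_c),\mathrm{slope}(\hat q-\hat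 q_c))$. Pointed irregular type: $Q=[(n_1,q_1),\dots,(n_m,q_m)]$ with $n_i\in\mathbb N_{>0}$ and $q_i$ in pairwise distinct Galois orbits. $Q$ is compatible if for all $k\in\mathbb Q_{>0}$ and all $i,j$, $\langle\tau_k(q_i)\rangle=\langle\tau_k(q_j)\rangle$ implies $\tau_k(q_i)=\tau_k(q_j)$. Its labelled fission datum is the list $[(n_i,\mathrm{Levels}(q_i))]_{i=1}^m$ together with the numbers $f_{q_i,q_j}$ ($i\ne j$). For a list $Q'$ of pairs $(n'_i,q'_i)$ with $n'_i\in\mathbb N_{>0}$ and $q'_i$ exponential factors, $Q'\sim Q$ means $p=m$, $n'_i=n_i$, and $\mathrm{slope}(\sigma^k(q'_i)-\sigma^l(q'_j))=\mathrm{slope}(\sigma^k(q_i)-\sigma^l(q_j))$ for all $1\le i,j\le m$, $0\le k\le\mathrm{ram}(q_i)$, $0\le l\le\mathrm{ram}(q_j)$. *)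

From mathcomp Require Import all_boot all_order all_algebra.
From mathcomp Require Import finmap.
From mathcomp Require Import complex.
From mathcomp Require Import boolp reals trigo.
Import Order.TTheory GRing.Theory Num.Theory.

Set Implicit Arguments.
Unset Strict Implicit.
Unset Printing Implicit Defensive.

Local Open Scope ring_scope.
Local Open Scope complex_scope.

Section ExpFactors.
Variable R : realType.

(* An exponential factor  q = sum_k a_k x^k  (k rational, a_k complex) is
   represented by its finitely supported coefficient function k |-> a_k. *)
Definition EF := {fsfun rat -> R[i] with 0}.

Definition expfac (q : EF) : Prop := forall k : rat, k \in finsupp q -> 0 < k.

Definition ef0 : EF := [fsfun k in (fset0 : {fset rat}) => (0 : R[i])].

Definition zeta (t : rat) : R[i] :=
  cos (2 * pi * ratr t) -i* sin (2 * pi * ratr t).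
Definition zetainv (t : rat) : R[i] :=
  cos (2 * pi * ratr t) +i* sin (2 * pi * ratr t).

Definition gal (q : EF) : EF := [fsfun k in finsupp q => q k * zeta k].
Definition galinv (q : EF) : EF := [fsfun k in finsupp q => q k * zetainv k].

Definition galz (i : int) (q : EF) : EF :=
  match i with
  | Posz n => iter n gal q
  | Negz n => iter n.+1 galinv q
  end.

(* <a> = <b> : equality of the Stokes circles (Galois orbits) as sets *)
Definition orbit_eq (a b : EF) : Prop :=
  forall c : EF, (exists i : int, c = galz i a) <-> (exists i : int, c = galz i b).

Definition trunc (k : rat) (q : EF) : EF :=
  [fsfun k' in finsupp q => if k <= k' then q k' else 0].

Definition subEF (p q : EF) : EF :=
  [fsfun k in fsetU (finsupp p) (finsupp q) => p k - q k].

(* slope = max E(q), 0 if q = 0 (exponents are positive) *)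
Definition slope (q : EF) : rat := \big[Num.max/0]_(k <- finsupp q) k.

(* ram(q) = least r >= 1 with q in x^{1/r} C[x^{1/r}] *)
Definition ram_pred (q : EF) : pred nat :=
  fun r => (0 < r)%N && all (fun k : rat => k * r%:R \is a Num.int) (finsupp q).

Definition ram (q : EF) : nat :=
  match pselect (exists r, ram_pred q r) with
  | left h => ex_minn h
  | right _ => 1%N
  end.

Definition levels (q : EF) : rat -> Prop :=
  fun x => (exists i : int, x = slope (subEF q (galz i q))) /\ x != 0.

Definition min_seq (s : seq rat) : rat := \big[Num.min/head 0 s]_(k <- s) k.

Definition fission (q qh : EF) : rat :=
  let S := [seq k <- finsupp q | `[< orbit_eq (trunc k q) (trunc k qh) >] ] in
  let k := min_seq S in
  let qc := if S is [::] then ef0 else trunc k q in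
  let qhc := if S is [::] then ef0 else trunc k qh in
  Num.max (slope (subEF q qc)) (slope (subEF qh qhc)).

(* lists Q = [(n_1,q_1),...,(n_m,q_m)], indexed from 0 *)
Definition dflt_pair : nat * EF := (0%N, ef0).
Definition nQ (Q : seq (nat * EF)) (i : nat) : nat := (nth dflt_pair Q i).1.
Definition qQ (Q : seq (nat * EF)) (i : nat) : EF := (nth dflt_pair Q i).2.

Definition pointed_irregular_type (Q : seq (nat * EF)) : Prop :=
  (forall i, (i < size Q)%N -> (0 < nQ Q i)%N /\ expfac (qQ Q i)) /\
  (forall i j, (i < size Q)%N -> (j < size Q)%N -> i <> j ->
     ~ orbit_eq (qQ Q i) (qQ Q j)).

Definition compatible (Q : seq (nat * EF)) : Prop :=
  pointed_irregular_type Q /\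
  forall k : rat, 0 < k -> forall i j, (i < size Q)%N -> (j < size Q)%N ->
    orbit_eq (trunc k (qQ Q i)) (trunc k (qQ Q j)) ->
    trunc k (qQ Q i) = trunc k (qQ Q j).

Definition same_fission_datum (Q' Q : seq (nat * EF)) : Prop :=
  size Q' = size Q /\
  (forall i, (i < size Q)%N -> nQ Q' i = nQ Q i /\ levels (qQ Q' i) = levels (qQ Q i)) /\
  (forall i j, (i < size Q)%N -> (j < size Q)%N -> i <> j ->
     fission (qQ Q' i) (qQ Q' j) = fission (qQ Q i) (qQ Q j)).

Definition sim (Q' Q : seq (nat * EF)) : Prop :=
  size Q' = size Q /\
  (forall i, (i < size Q)%N -> nQ Q' i = nQ Q i) /\
  (forall i j, (i < size Q)%N -> (j < size Q)%N ->
   forall k l : nat, (k <= ram (qQ Q i))%N -> (l <= ram (qQ Q j))%N ->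
     slope (subEF (galz k (qQ Q' i)) (galz l (qQ Q' j)))
     = slope (subEF (galz k (qQ Q i)) (galz l (qQ Q j)))).

End ExpFactors.

From mathcomp Require Import all_boot all_order all_algebra.
From mathcomp Require Import finmap complex boolp reals trigo.
Import Order.TTheory GRing.Theory Num.Theory.

(* Write d(p, q) for the slope of p - q and call c |-> d(q, sigma^c q') the orbit
   slopes of (q, q').  Everything in the statement is a function of orbit slopes:
   two Stokes circles coincide iff some orbit slope vanishes, their truncations at
   k coincide iff some orbit slope is < k, Levels(q) is the set of nonzero orbit
   slopes of (q, q), and for a compatible pair f_{q,q'} = d(q, q').  Conversely d
   is an ultrametric, and compatibility forces
     d(q, sigma^c q') = max(d(q, q'), d(q, sigma^c q)),
   so the levels and fission exponents determine all orbit slopes.  Finally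
   sigma^(ram q) fixes q, so the finitely many slopes compared by ~ already
   determine all of them. *)

Set Implicit Arguments.
Unset Strict Implicit.
Unset Printing Implicit Defensive.
Local Open Scope ring_scope.

Section ExponentialFactors.
Variable R : realType.
Local Notation EF := (EF R).
Local Notation zeta := (@zeta R).

Lemma zetaD a b : zeta (a + b) = zeta a * zeta b.
Proof.
rewrite /zeta rmorphD /= mulrDr cosD sinD.
apply/eqP; rewrite eq_complex /=; apply/andP; split; apply/eqP.
  by rewrite mulrNN.
by rewrite mulrN mulNr -opprD addrC.
Qed.

Lemma zeta0 : zeta 0 = 1.
Proof. by rewrite /zeta rmorph0 mulr0 cos0 sin0 oppr0. Qed.

Lemma zeta1 : zeta 1 = 1.
Proof. by rewrite /zeta rmorph1 mulr1 mulr_natl cos2pi sin2pi oppr0. Qed.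

Lemma zetaNr a : zeta (- a) * zeta a = 1.
Proof. by rewrite -zetaD addNr zeta0. Qed.

Lemma zeta_neq0 a : zeta a != 0.
Proof. by apply: contra_eq_neq (zetaNr a) => ->; rewrite mulr0 eq_sym oner_neq0. Qed.

Lemma zeta_int (n : int) : zeta n%:~R = 1.
Proof.
have zeta_nat (m : nat) : zeta m%:R = 1.
  by elim: m => [|m IH]; rewrite ?mulr0n ?zeta0 // mulrSr zetaD IH zeta1 mulr1.
case: n => m; first exact: zeta_nat.
by rewrite NegzE mulrNz -[LHS]mulr1 -(zeta_nat m.+1) zetaNr.
Qed.

Lemma zetainvE a : zetainv R a = zeta (- a).
Proof. by rewrite /zetainv /zeta rmorphN /= mulrN cosN sinN opprK. Qed.

Lemma galzE i (q : EF) k : galz i q k = q k * zeta (k * i%:~R).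
Proof.
have galE (p : EF) x : gal p x = p x * zeta x.
  by rewrite /gal fsfunE; case: finsuppP => //; rewrite mul0r.
have galinvE (p : EF) x : galinv p x = p x * zeta (- x).
  by rewrite /galinv fsfunE -zetainvE; case: finsuppP => //; rewrite mul0r.
case: i => n /=.
  elim: n => [|n IH]; first by rewrite mulr0 zeta0 mulr1.
  by rewrite iterS galE IH -mulrA -zetaD -addn1 PoszD intrD mulrDr mulr1.
have -> : (Negz n)%:~R = - n.+1%:R :> rat by rewrite NegzE intrN.
elim: n => [|n IH]; first by rewrite /= galinvE mulrN mulr1.
rewrite iterS galinvE IH -mulrA -zetaD; congr (_ * zeta _).
by rewrite [n.+2%:R]mulrS opprD mulrDr mulrN1 addrC.
Qed.

Lemma galzD i j (q : EF) : galz i (galz j q) = galz (i + j) q.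
Proof.
apply/fsfunP => k; rewrite !galzE -mulrA -zetaD.
by rewrite intrD mulrDr addrC.
Qed.

Lemma galz_neq d (p q : EF) x : (galz d p x != galz d q x) = (p x != q x).
Proof. by rewrite !galzE (inj_eq (mulIf (zeta_neq0 _))). Qed.

Lemma expfac_galz d (q : EF) : expfac q -> expfac (galz d q).
Proof.
move=> Eq k; rewrite mem_finsupp galzE mulf_eq0 negb_or => /andP [qk _].
by apply: Eq; rewrite mem_finsupp.
Qed.

Lemma orbit_eqP (a b : EF) : orbit_eq a b <-> exists i, a = galz i b.
Proof.
split; first by move=> ab; apply/ab; exists 0.
move=> [i ->] c; split.
  by move=> [j ->]; exists (j + i); rewrite galzD.
by move=> [j ->]; exists (j - i); rewrite galzD subrK.
Qed.

Lemma subEFE (p q : EF) k : subEF p q k = p k - q k.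
Proof.
rewrite /subEF fsfunE inE.
by case: finsuppP => [_|_]; case: finsuppP => [_|_] //=; rewrite subr0.
Qed.

Lemma truncE c (q : EF) k : trunc c q k = if c <= k then q k else 0.
Proof. by rewrite /trunc fsfunE; case: finsuppP => //; case: ifP. Qed.

Lemma trunc_galz c d (q : EF) : trunc c (galz d q) = galz d (trunc c q).
Proof.
by apply/fsfunP => x; rewrite truncE !galzE truncE; case: ifP; rewrite ?mul0r.
Qed.

Lemma ef0E k : ef0 R k = 0.
Proof. by rewrite /ef0 fsfunE inE. Qed.

Lemma slope_ge0 (q : EF) : 0 <= slope q.
Proof. exact: bigmax_ge_id. Qed.

Lemma le_slope (q : EF) x : x \in finsupp q -> x <= slope q.
Proof. by move=> xq; rewrite /slope (le_bigmax_seq _ _ _ (fun k => k) xq). Qed.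

Lemma bigmax_seq_mem (s : seq rat) :
  \big[Num.max/0]_(k <- s) k != 0 -> \big[Num.max/0]_(k <- s) k \in s.
Proof.
elim: s => [|a s IH]; rewrite ?big_nil ?eqxx //.
rewrite big_cons inE maxEle; case: ifP => _; last by rewrite eqxx.
by move=> /IH ->; rewrite orbT.
Qed.

Lemma slope_mem (q : EF) : slope q != 0 -> slope q \in finsupp q.
Proof. exact: bigmax_seq_mem. Qed.

Definition dslope (p q : EF) : rat := slope (subEF p q).

Lemma dslope_ge0 (p q : EF) : 0 <= dslope p q.
Proof. exact: slope_ge0. Qed.

Lemma le_dslope (p q : EF) x : p x != q x -> x <= dslope p q.
Proof. by move=> pq; apply: le_slope; rewrite mem_finsupp subEFE subr_eq0. Qed.

Lemma dslope_neq (p q : EF) : dslope p q != 0 -> p (dslope p q) != q (dslope p q).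
Proof. by move/slope_mem; rewrite mem_finsupp subEFE subr_eq0. Qed.

Lemma dslope_le (p q : EF) b :
  0 <= b -> (forall x, p x != q x -> x <= b) -> dslope p q <= b.
Proof. by move=> b0 pqb; have [->//|/dslope_neq/pqb] := eqVneq (dslope p q) 0. Qed.

Lemma eq_dslope (p q p' q' : EF) :
  (forall x, (p x != q x) = (p' x != q' x)) -> dslope p q = dslope p' q'.
Proof.
move=> pq; apply/le_anti/andP; split; apply: dslope_le; rewrite ?dslope_ge0 // => x.
  by rewrite pq; apply: le_dslope.
by rewrite -pq; apply: le_dslope.
Qed.

Lemma dslopeC (p q : EF) : dslope p q = dslope q p.
Proof. by apply: eq_dslope => x; rewrite eq_sym. Qed.

Lemma dslopexx (p : EF) : dslope p p = 0.
Proof. by apply/le_anti; rewrite dslope_ge0 andbT dslope_le // => x; rewrite eqxx. Qed.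

Lemma dslope_galz d (p q : EF) : dslope (galz d p) (galz d q) = dslope p q.
Proof. by apply: eq_dslope => x; rewrite galz_neq. Qed.

Lemma dslope_le_max (p q r : EF) :
  dslope p r <= Num.max (dslope p q) (dslope q r).
Proof.
apply: dslope_le => [|x pr]; first by rewrite le_max dslope_ge0.
have [pq|/le_dslope qr] := eqVneq (p x) (q x).
  by rewrite le_max orbC le_dslope // -pq.
by rewrite le_max qr.
Qed.

Lemma dslope_eq0 (p q : EF) : expfac p -> expfac q -> dslope p q = 0 -> p = q.
Proof.
move=> Ep Eq pq0; apply/fsfunP => x; apply/eqP/contraT => pqx.
have x_gt0 : 0 < x.
  have [px0|px0] := eqVneq (p x) 0; last by apply: Ep; rewrite mem_finsupp.
  by apply: Eq; rewrite mem_finsupp; move: pqx; rewrite px0 eq_sym.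
by have := le_dslope pqx; rewrite pq0 leNgt x_gt0.
Qed.

Lemma trunc_eq_dslope c (p q : EF) :
  0 < c -> trunc c p = trunc c q <-> dslope p q < c.
Proof.
move=> c_gt0; split => [pqc|pqc].
  have [->//|/dslope_neq] := eqVneq (dslope p q) 0.
  rewrite ltNge; apply: contra => cD.
  by move/fsfunP: pqc => /(_ (dslope p q)); rewrite !truncE cD => /eqP.
apply/fsfunP => x; rewrite !truncE; case: ifP => // cx.
by apply/eqP/contraT => /le_dslope /le_lt_trans /(_ pqc); rewrite ltNge cx.
Qed.

Definition orbit_slope (p q : EF) (c : int) : rat := dslope p (galz c q).

Lemma dslope_galz_galz k l (p q : EF) :
  dslope (galz k p) (galz l q) = orbit_slope p q (l - k).
Proof. by rewrite /orbit_slope -(dslope_galz k p) galzD addrC subrK. Qed.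

Lemma orbit_eq_slope (p q : EF) :
  expfac p -> expfac q -> orbit_eq p q <-> exists c, orbit_slope p q c = 0.
Proof.
move=> Ep Eq; rewrite orbit_eqP; split=> -[c pq]; exists c.
  by rewrite /orbit_slope -pq dslopexx.
by apply: dslope_eq0 => //; apply: expfac_galz.
Qed.

Lemma orbit_eq_trunc_slope k (p q : EF) : 0 < k ->
  orbit_eq (trunc k p) (trunc k q) <-> exists c, orbit_slope p q c < k.
Proof.
move=> k_gt0; rewrite orbit_eqP.
by split=> -[c pq]; exists c; move: pq; rewrite -trunc_galz trunc_eq_dslope.
Qed.

Definition compat_pair (p q : EF) : Prop :=
  forall k, 0 < k -> orbit_eq (trunc k p) (trunc k q) -> trunc k p = trunc k q.

Lemma compat_pairP (p q : EF) : compat_pair p q <->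
  forall k, 0 < k -> (exists c, orbit_slope p q c < k) -> dslope p q < k.
Proof.
by split=> pq k k_gt0 /(orbit_eq_trunc_slope _ _ k_gt0) /(pq _ k_gt0)
  /(trunc_eq_dslope _ _ k_gt0).
Qed.

Lemma orbit_slope_compat d (p q : EF) : compat_pair p q ->
  orbit_slope p q d = Num.max (dslope p q) (orbit_slope p p d).
Proof.
move=> /compat_pairP pq; apply/le_anti/andP; split.
  by rewrite maxC -[dslope p q](dslope_galz d) dslope_le_max.
(* A strict inequality would put the truncations at m on a common Stokes circle. *)
rewrite leNgt; apply/negP; set m := Num.max _ _ => pqd_lt.
have m_gt0 : 0 < m := le_lt_trans (dslope_ge0 _ _) pqd_lt.
have pq_lt : dslope p q < m by apply: pq m_gt0 _; exists d.
suff ppd_lt : orbit_slope p p d < m by move: (ltxx m); rewrite {1}/m gt_max pq_lt ppd_lt.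
apply: le_lt_trans (dslope_le_max p (galz d q) (galz d p)) _.
by rewrite gt_max pqd_lt dslope_galz dslopeC.
Qed.

Lemma galz_self_neq d (q : EF) x :
  (q x != galz d q x) = (q x != 0) && (zeta (x * d%:~R) != 1).
Proof.
rewrite galzE; have [->|qx] := eqVneq (q x) 0; first by rewrite mul0r eqxx.
by rewrite -[X in X != _]mulr1 (inj_eq (mulfI qx)) eq_sym.
Qed.

Lemma orbit_slope_self_le (p q : EF) d :
  levels p = levels q -> orbit_slope q q d <= orbit_slope p p d.
Proof.
move=> pq; set s := orbit_slope q q d.
have [->|s_neq0] := eqVneq s 0; first exact: dslope_ge0.
have := dslope_neq s_neq0; rewrite -/s galz_self_neq => /andP [_ zs].
have : levels p s by rewrite pq; split=> //; exists d.
case=> -[e se] _; apply: le_dslope; rewrite galz_self_neq zs andbT.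
have : p s != galz e p s by move: s_neq0; rewrite se => /dslope_neq.
by rewrite galz_self_neq => /andP [].
Qed.

Lemma levels_eq (p q : EF) :
  levels p = levels q <-> orbit_slope p p =1 orbit_slope q q.
Proof.
split=> [pq d|pq]; first by apply/le_anti; rewrite !orbit_slope_self_le.
apply/funext => x; apply/propext; rewrite /levels.
by split=> -[[i ->] x_neq0]; split=> //; exists i; [exact: pq | exact: esym (pq i)].
Qed.

Lemma bigmin_seq_mem (x0 : rat) (s : seq rat) :
  \big[Num.min/x0]_(k <- s) k \in x0 :: s.
Proof.
elim: s => [|a s IH]; rewrite ?big_nil ?inE ?eqxx //.
rewrite big_cons minEle; case: ifP => _; rewrite ?eqxx ?orbT //.
by move: IH; rewrite inE => /orP [/eqP ->|->]; rewrite ?eqxx ?orbT.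
Qed.

Lemma min_seq_mem (s : seq rat) : s != [::] -> min_seq s \in s.
Proof.
case: s => [//|a s] _; rewrite /min_seq /=; have := bigmin_seq_mem a (a :: s).
by rewrite inE => /orP [/eqP ->|//]; rewrite inE eqxx.
Qed.

Lemma min_seq_le (s : seq rat) x : x \in s -> min_seq s <= x.
Proof. by move=> xs; rewrite /min_seq (ge_bigmin_seq _ _ _ (fun k => k) xs). Qed.

Lemma max_dslope_cut (p q c : EF) : dslope p c <= dslope p q ->
  Num.max (dslope p c) (dslope q c) = dslope p q.
Proof.
move=> pc_le; apply/le_anti/andP; split.
  rewrite ge_max pc_le; apply: le_trans (dslope_le_max q p c) _.
  by rewrite ge_max pc_le dslopeC lexx.
by rewrite [dslope q c]dslopeC dslope_le_max.
Qed.

Lemma fission_eq_dslope (q h : EF) :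
  expfac q -> compat_pair q h -> fission q h = dslope q h.
Proof.
move=> Eq qh; rewrite /fission /=; set S := [seq _ <- _ | _].
(* Every exponent of q below the cut point [min_seq S] lies outside S, hence is
   bounded by d(q, h); this is what makes both cases collapse to d(q, h). *)
have notinS x : x \in finsupp q -> x \notin S -> x <= dslope q h.
  rewrite mem_filter => xq; rewrite xq andbT => /asboolPn nqh.
  rewrite leNgt; apply/negP => /(trunc_eq_dslope _ _ (Eq x xq)) qhx.
  by apply: nqh; rewrite qhx; apply/orbit_eqP; exists 0.
case ES: S => [|a l].
  apply: max_dslope_cut; apply: dslope_le => [|x]; rewrite ?dslope_ge0 // ef0E => qx.
  by apply: notinS; rewrite ?mem_finsupp ?ES.
set k := min_seq (a :: l).
have : k \in S by rewrite ES min_seq_mem.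
rewrite mem_filter => /andP [/asboolP qhk kq].
rewrite -(qh k (Eq k kq) qhk); apply: max_dslope_cut.
apply: dslope_le => [|x]; rewrite ?dslope_ge0 // truncE.
case: ifPn => [_|xk qx]; first by rewrite eqxx.
apply: notinS; first by rewrite mem_finsupp.
by apply: contra xk; rewrite ES => /min_seq_le.
Qed.

Lemma mul_denq_int (x : rat) : x * `|denq x|%:R \is a Num.int.
Proof. by case: (denqP x) => d dE; rewrite dE -[d.+1%:R]/(Posz d.+1)%:~R -dE -numqE. Qed.

Lemma ram_predP (q : EF) : ram_pred q (ram q).
Proof.
rewrite /ram; case: pselect => [h|[]]; first by case: ex_minnP.
exists (\prod_(k <- finsupp q) `|denq k|)%N; apply/andP; split.
  by rewrite prodn_gt0 // => k; rewrite absz_gt0 denq_neq0.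
apply/allP => x xq; rewrite (big_rem x xq) /= natrM mulrA.
by rewrite rpredM ?mul_denq_int ?rpred_nat.
Qed.

Lemma ram_gt0 (q : EF) : (0 < ram q)%N.
Proof. by case/andP: (ram_predP q). Qed.

Lemma galz_ram (q : EF) : galz (ram q) q = q.
Proof.
apply/fsfunP => k; rewrite galzE; case: (finsuppP q k) => [_|kq]; first by rewrite mul0r.
case/andP: (ram_predP q) => _ /allP /(_ k kq) /intrP [m ->].
by rewrite zeta_int mulr1.
Qed.

Lemma galz_mul_period (p : EF) (r : int) : galz r p = p ->
  forall n : int, galz (n * r) p = p.
Proof.
move=> rp; have galz_nat (m : nat) : galz (m%:Z * r) p = p.
  by elim: m => [|m IH]; rewrite ?mul0r // intS mulrDl mul1r -galzD IH rp.
case=> m; first exact: galz_nat.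
by rewrite NegzE mulNr -[in LHS](galz_nat m.+1) galzD addNr.
Qed.

Lemma galz_modz (p : EF) (r c : int) : galz r p = p -> galz c p = galz (c %% r)%Z p.
Proof. by move=> rp; rewrite {1}(divz_eq c r) addrC -galzD galz_mul_period. Qed.

Definition same_slopes (Q' Q : seq (nat * EF)) : Prop :=
  [/\ size Q' = size Q, forall i, (i < size Q)%N -> nQ Q' i = nQ Q i &
    forall i j, (i < size Q)%N -> (j < size Q)%N ->
      orbit_slope (qQ Q' i) (qQ Q' j) =1 orbit_slope (qQ Q i) (qQ Q j)].

Lemma sim_slopes (Q' Q : seq (nat * EF)) :
  (forall i, (i < size Q')%N -> expfac (qQ Q' i)) -> sim Q' Q <-> same_slopes Q' Q.
Proof.
move=> E'; split=> [[sz [n sl]]|[sz n agree]]; last first.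
  do 2!split=> //; move=> i j i_lt j_lt k l _ _.
  by rewrite -!/(dslope _ _) !dslope_galz_galz agree.
(* [galz 0] is the identity, so the pairs (0, l) of [sim] give the orbit slopes
   at 0 <= l <= ram; the periodicity of [galz] then gives all of them. *)
have sl0 i j (l : nat) : (i < size Q)%N -> (j < size Q)%N -> (l <= ram (qQ Q j))%N ->
    orbit_slope (qQ Q' i) (qQ Q' j) l = orbit_slope (qQ Q i) (qQ Q j) l.
  by move=> i_lt j_lt; exact: sl i j i_lt j_lt 0%N l (leq0n _).
have period j : (j < size Q)%N -> galz (ram (qQ Q j)) (qQ Q' j) = qQ Q' j.
  rewrite -sz => j_lt; apply/esym/dslope_eq0; [exact: E' | exact/expfac_galz/E' |].
  by rewrite [LHS]sl0 -?sz // /orbit_slope galz_ram dslopexx.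
split=> // i j i_lt j_lt c.
rewrite /orbit_slope (galz_modz c (period j j_lt)) (galz_modz c (galz_ram (qQ Q j))).
have r_gt0 : 0 < (ram (qQ Q j))%:Z by rewrite ltz_nat ram_gt0.
have := ltz_pmod c r_gt0; have := modz_ge0 c (lt0r_neq0 r_gt0).
by case: (c %% _)%Z => [l|//] _; rewrite ltz_nat => /ltnW; exact: sl0.
Qed.

Lemma compat_pair_slopes (p q p' q' : EF) :
  orbit_slope p' q' =1 orbit_slope p q -> compat_pair p q -> compat_pair p' q'.
Proof.
move=> pq /compat_pairP pq_compat; apply/compat_pairP => k k_gt0 [c].
rewrite -[dslope p' q']/(orbit_slope p' q' 0) !pq => pqc.
by apply: pq_compat k_gt0 _; exists c.
Qed.

Lemma compatible_pair (Q : seq (nat * EF)) i j : compatible Q ->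
  (i < size Q)%N -> (j < size Q)%N -> compat_pair (qQ Q i) (qQ Q j).
Proof. by move=> [_ compQ] i_lt j_lt k k_gt0; apply: compQ. Qed.

Lemma compatible_slopes (Q' Q : seq (nat * EF)) : compatible Q ->
  (forall i, (i < size Q')%N -> (0 < nQ Q' i)%N /\ expfac (qQ Q' i)) ->
  same_slopes Q' Q -> compatible Q'.
Proof.
move=> /[dup] cQ [[PQ distQ] _] PQ' [sz _ agree].
have E' i : (i < size Q)%N -> expfac (qQ Q' i) by rewrite -sz => /PQ' [].
split; first split=> [//|i j]; first rewrite sz => i_lt j_lt ij.
  rewrite orbit_eq_slope; [|exact: E'..].
  move=> [c ijc]; apply: (distQ i j i_lt j_lt ij); apply/orbit_eq_slope.
  - exact: (PQ i i_lt).2.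
  - exact: (PQ j j_lt).2.
  by exists c; rewrite -agree.
move=> k k_gt0 i j; rewrite sz => i_lt j_lt.
by apply: compat_pair_slopes (agree i j i_lt j_lt) (compatible_pair cQ i_lt j_lt) k k_gt0.
Qed.

Lemma fission_datum_slopes (Q' Q : seq (nat * EF)) : compatible Q -> compatible Q' ->
  same_fission_datum Q' Q <-> same_slopes Q' Q.
Proof.
move=> cQ cQ'; have E i : (i < size Q)%N -> expfac (qQ Q i) by case: cQ => -[PQ _ _] /PQ [].
have E' i : (i < size Q')%N -> expfac (qQ Q' i) by case: cQ' => -[PQ' _ _] /PQ' [].
split=> [[sz [nl fis]]|[sz n agree]].
  split=> // [i /nl [] //|i j i_lt j_lt c].
  have i_lt' : (i < size Q')%N by rewrite sz.
  have j_lt' : (j < size Q')%N by rewrite sz.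
  have [_ /levels_eq lev_i] := nl i i_lt.
  have [<-//|ij] := eqVneq i j.
  rewrite (orbit_slope_compat _ (compatible_pair cQ' i_lt' j_lt')).
  rewrite (orbit_slope_compat _ (compatible_pair cQ i_lt j_lt)) lev_i.
  rewrite -(fission_eq_dslope (E' i i_lt') (compatible_pair cQ' i_lt' j_lt')).
  rewrite -(fission_eq_dslope (E i i_lt) (compatible_pair cQ i_lt j_lt)).
  by rewrite fis //; apply/eqP.
split=> //; split=> [i i_lt|i j i_lt j_lt _].
  by split; [exact: n | apply/levels_eq; exact: agree].
have i_lt' : (i < size Q')%N by rewrite sz.
have j_lt' : (j < size Q')%N by rewrite sz.
rewrite (fission_eq_dslope (E' i i_lt') (compatible_pair cQ' i_lt' j_lt')).
rewrite (fission_eq_dslope (E i i_lt) (compatible_pair cQ i_lt j_lt)).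
exact: agree i j i_lt j_lt 0.
Qed.

End ExponentialFactors.

Theorem mainTheorem7 (R : realType) (Q Q' : seq (nat * EF R)) :
  compatible Q ->
  (forall i, (i < size Q')%N -> (0 < nQ Q' i)%N /\ expfac (qQ Q' i)) ->
  (sim Q' Q <-> compatible Q' /\ same_fission_datum Q' Q).
Proof.
move=> cQ PQ'; rewrite sim_slopes; last by move=> i /PQ' [].
split=> [QQ'|[cQ' /(fission_datum_slopes cQ cQ')] //].
have cQ' := compatible_slopes cQ PQ' QQ'.
by split; last apply/(fission_datum_slopes cQ cQ').
Qed.
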